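(* Let $A,W\in\mathbb R^{d\times d}$ be symmetric positive definite and $c\in\mathbb R^d$; let $\mathcal X=\{x:\|x\|_A\le1\}$, $\Theta=\{\theta:\|\theta-c\|_W\le1\}$. Let $U$ be an orthogonal matrix with $A^{1/2}WA^{1/2}=U\Lambda U^\top$, $\Lambda=\mathrm{diag}(\lambda_1,\dots,\lambda_d)$, and let $b=U^\top A^{-1/2}c$. Let $F(y)=-\sum_{i=1}^d\sqrt{y_i}\,|b_i|-\sqrt{\sum_{i=1}^d\lambda_i^{-1}y_i}$ and consider the problem $P_C$: minimize $F(y)$ over $y\in\Delta_{d-1}$. Given $y\in\Delta_{d-1}$, define $u_i=\sqrt{y_i}\,\mathrm{sign}(b_i)$ for $i\in[d]$, $x=A^{-1/2}Uu$ and $\theta^\star=c+W^{-1}x/\|x\|_{W^{-1}}$. Then $(x,\theta^\star)\in\mathcal X\times\Theta$, and for any $\varepsilon>0$, $y$ is an $\varepsilon$-solution to $P_C$ if and only if $(x,\theta^\star)$ is an $\varepsilon$-solution to $P_B$.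
   Context: $\|z\|_M=\sqrt{z^\top Mz}$. $\Delta_{d-1}=\{y\in\mathbb R^d:y_i\ge0,\sum_iy_i=1\}$. Convention $\mathrm{sign}(0)=1$. $P_B$: maximize $x^\top\theta$ over $(x,\theta)\in\mathcal X\times\Theta$. An $\varepsilon$-solution to $P_B$ is a pair $(x,\theta)\in\mathcal X\times\Theta$ with $x^\top\theta\ge\sup_{\mathcal X\times\Theta}x'^\top\theta'-\varepsilon$; an $\varepsilon$-solution to $P_C$ is $y\in\Delta_{d-1}$ with $F(y)\le\min_{\Delta_{d-1}}F+\varepsilon$. *)

From mathcomp Require Import all_boot all_order all_algebra.
From mathcomp Require Import all_classical all_reals.
Set Implicit Arguments. Unset Strict Implicit. Unset Printing Implicit Defensive.
Import Order.TTheory GRing.Theory Num.Theory.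
Local Open Scope ring_scope.
Local Open Scope classical_set_scope.

Section Defs.
Variable R : realType.

Definition dotv d (x y : 'cV[R]_d) : R := (x^T *m y) 0 0.

Definition mnorm d (M : 'M[R]_d) (z : 'cV[R]_d) : R := Num.sqrt (dotv z (M *m z)).

Definition sym_posdef d (M : 'M[R]_d) : Prop :=
  M^T = M /\ forall z : 'cV[R]_d, z != 0 -> 0 < dotv z (M *m z).

(* sign with convention sign(0) = 1 *)
Definition sgn (r : R) : R := if 0 <= r then 1 else -1.

Definition simplex d : set 'cV[R]_d :=
  [set y | (forall i, 0 <= y i 0) /\ \sum_i y i 0 = 1].

Definition Xset d (A : 'M[R]_d) : set 'cV[R]_d := [set x | mnorm A x <= 1].
Definition Thset d (W : 'M[R]_d) (c : 'cV[R]_d) : set 'cV[R]_d :=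
  [set th | mnorm W (th - c) <= 1].

Definition Fobj d (lam b : 'cV[R]_d) (y : 'cV[R]_d) : R :=
  - (\sum_i Num.sqrt (y i 0) * `|b i 0|) - Num.sqrt (\sum_i (lam i 0)^-1 * y i 0).

Definition eps_sol_PB d (A W : 'M[R]_d) (c : 'cV[R]_d) (eps : R)
    (x th : 'cV[R]_d) : Prop :=
  x \in Xset A /\ th \in Thset W c /\
  dotv x th >= sup [set dotv x' th' | x' in Xset A & th' in Thset W c] - eps.

Definition eps_sol_PC d (lam b : 'cV[R]_d) (eps : R) (y : 'cV[R]_d) : Prop :=
  y \in @simplex d /\ Fobj lam b y <= inf [set Fobj lam b y' | y' in @simplex d] + eps.

End Defs.

From mathcomp Require Import all_boot all_order all_algebra.
From mathcomp Require Import all_classical all_reals.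
From mathcomp Require Import ring lra.
Set Implicit Arguments. Unset Strict Implicit. Unset Printing Implicit Defensive.
Import Order.TTheory GRing.Theory Num.Theory.
Local Open Scope ring_scope.
Local Open Scope classical_set_scope.

(* In the coordinates v = U^T A^{1/2} x one has ||x||_A = |v|, x^T c = v^T b and
   ||x||_{W^-1}^2 = sum_i v_i^2 / lam_i.  Cauchy-Schwarz for the W-inner product gives
   max_{theta in Theta} x^T theta = x^T c + ||x||_{W^-1}, attained at theta*.  Substituting
   y_i = v_i^2 (padded up to the simplex, which can only increase the value) shows
   sup P_B = -min P_C, while the pair built from y has value exactly -F(y); so both
   epsilon-optimality conditions are the same inequality. *)

Section Dotv.
Variables (R : realType) (d : nat).
Implicit Types (u v w : 'cV[R]_d) (M : 'M[R]_d).

Lemma dotvE u v : dotv u v = \sum_i u i 0 * v i 0.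
Proof. by rewrite /dotv mxE; apply: eq_bigr => i _; rewrite mxE. Qed.

Lemma dotvC u v : dotv u v = dotv v u.
Proof. by rewrite !dotvE; apply: eq_bigr => i _; rewrite mulrC. Qed.

Lemma dotvDl u v w : dotv (u + v) w = dotv u w + dotv v w.
Proof. by rewrite !dotvE -big_split; apply: eq_bigr => i _; rewrite mxE mulrDl. Qed.

Lemma dotvDr u v w : dotv w (u + v) = dotv w u + dotv w v.
Proof. by rewrite dotvC dotvDl !(dotvC w). Qed.

Lemma dotvZl k u v : dotv (k *: u) v = k * dotv u v.
Proof. by rewrite !dotvE mulr_sumr; apply: eq_bigr => i _; rewrite mxE mulrA. Qed.

Lemma dotvZr k u v : dotv u (k *: v) = k * dotv u v.
Proof. by rewrite dotvC dotvZl dotvC. Qed.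

Lemma dotvNl u v : dotv (- u) v = - dotv u v.
Proof. by rewrite -scaleN1r dotvZl mulN1r. Qed.

Lemma dotvNr u v : dotv u (- v) = - dotv u v.
Proof. by rewrite dotvC dotvNl dotvC. Qed.

Lemma dotv0l v : dotv 0 v = 0.
Proof. by rewrite dotvE big1 // => i _; rewrite mxE mul0r. Qed.

Lemma dotvMl M u v : dotv (M *m u) v = dotv u (M^T *m v).
Proof. by rewrite /dotv trmx_mul mulmxA. Qed.

Lemma dotvMr M u v : dotv u (M *m v) = dotv (M^T *m u) v.
Proof. by rewrite dotvMl trmxK. Qed.

Lemma dotv_diag (lam v : 'cV[R]_d) :
  dotv v (diag_mx lam^T *m v) = \sum_i lam i 0 * v i 0 ^+ 2.
Proof.
rewrite dotvE mul_diag_mx; apply: eq_bigr => i _.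
by rewrite !mxE mulrCA expr2.
Qed.

Lemma posdef_ge0 M v : sym_posdef M -> 0 <= dotv v (M *m v).
Proof. by case=> _ HM; have [->|/HM/ltW //] := eqVneq v 0; rewrite dotv0l. Qed.

Lemma posdef_unit M : sym_posdef M -> M \in unitmx.
Proof.
case=> _ HM; rewrite unitmxE unitfE; apply/negP => /det0P [v v0 vM].
have : v^T != 0 by rewrite -(inj_eq (@trmx_inj _ _ _)) trmxK trmx0.
by move/HM; rewrite /dotv trmxK mulmxA vM mul0mx mxE ltxx.
Qed.

End Dotv.

Section DualNorm.
Variables (R : realType) (d : nat) (W : 'M[R]_d).
Hypothesis HW : sym_posdef W.
Implicit Types x q : 'cV[R]_d.
Local Notation Wi := (invmx W).
Local Notation maximizer x := ((mnorm Wi x)^-1 *: (Wi *m x)).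

Lemma dotv_posdef_sym p q : dotv p (W *m q) = dotv q (W *m p).
Proof. by case: HW => WT _; rewrite dotvMr WT dotvC. Qed.

Lemma dotv_invmx_gt0 x : x != 0 -> 0 < dotv x (Wi *m x).
Proof.
move=> x0; have xE : x = W *m (Wi *m x) by rewrite mulKVmx ?posdef_unit.
case: HW => WT; rewrite {1}xE dotvMl WT; apply.
by apply: contra x0; rewrite {2}xE => /eqP ->; rewrite mulmx0.
Qed.

Lemma mnorm_invmx_gt0 x : x != 0 -> 0 < mnorm Wi x.
Proof. by move=> /dotv_invmx_gt0; rewrite /mnorm sqrtr_gt0. Qed.

Lemma sqr_mnorm_invmx x : mnorm Wi x ^+ 2 = dotv x (Wi *m x).
Proof.
have [->|/dotv_invmx_gt0/ltW x0] := eqVneq x 0; last exact: sqr_sqrtr.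
by rewrite /mnorm mulmx0 dotv0l sqrtr0 expr0n.
Qed.

Lemma dotv_maximizer x q : dotv q (W *m maximizer x) = (mnorm Wi x)^-1 * dotv x q.
Proof. by rewrite -scalemxAr dotvZr mulKVmx ?posdef_unit // dotvC. Qed.

Lemma dotv_x_maximizer x : x != 0 -> dotv x (maximizer x) = mnorm Wi x.
Proof.
move=> /mnorm_invmx_gt0 n0; rewrite dotvZr -sqr_mnorm_invmx.
by field; rewrite gt_eqF.
Qed.

Lemma sqr_mnorm_maximizer x : x != 0 -> dotv (maximizer x) (W *m maximizer x) = 1.
Proof.
move=> x0; rewrite dotv_maximizer dotv_x_maximizer //.
by rewrite mulVf // gt_eqF // mnorm_invmx_gt0.
Qed.

Lemma mnorm_maximizer x : x != 0 -> mnorm W (maximizer x) = 1.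
Proof. by move=> x0; rewrite /mnorm sqr_mnorm_maximizer // sqrtr1. Qed.

(* Cauchy-Schwarz for the W-inner product, expanded around p := W^-1 x / ||x||_{W^-1}:
   0 <= ||p - q||_W^2 <= 2 - 2 x^T q / ||x||_{W^-1}. *)
Lemma dotv_le_mnorm_invmx x q : mnorm W q <= 1 -> dotv x q <= mnorm Wi x.
Proof.
rewrite /mnorm -sqrtr1 ler_sqrt // => q1.
have [->|x0] := eqVneq x 0; first by rewrite dotv0l sqrtr_ge0.
have n0 := mnorm_invmx_gt0 x0; have := posdef_ge0 (maximizer x - q) HW.
rewrite mulmxBr dotvDl dotvNl !dotvDr !dotvNr (dotv_posdef_sym (maximizer x) q).
rewrite sqr_mnorm_maximizer // dotv_maximizer => ge0.
have : (mnorm Wi x)^-1 * dotv x q <= 1 by lra.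
by rewrite ler_pdivrMl // mulr1.
Qed.

End DualNorm.

Lemma sgn_sqr (R : realType) (r : R) : sgn r ^+ 2 = 1.
Proof. by rewrite /sgn; case: ifP => _; rewrite ?expr1n ?sqrrN ?expr1n. Qed.

Lemma sgn_mul_norm (R : realType) (r : R) : sgn r * r = `|r|.
Proof.
rewrite /sgn; case: ifP => [r0|]; first by rewrite mul1r ger0_norm.
by move/negbT; rewrite -ltNge => r0; rewrite mulN1r ltr0_norm.
Qed.

Section Objective.
Variables (R : realType) (d : nat) (lam b : 'cV[R]_d).
Implicit Types v y : 'cV[R]_d.

Definition signed_sqrt y : 'cV[R]_d := \col_i (Num.sqrt (y i 0) * sgn (b i 0)).

(* the value max_{theta in Theta} x^T theta of P_B, in the coordinates v = U^T A^{1/2} x *)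
Definition reduced_obj v : R := dotv v b + Num.sqrt (\sum_i (lam i 0)^-1 * v i 0 ^+ 2).

Lemma signed_sqrt_sqr y i : 0 <= y i 0 -> signed_sqrt y i 0 ^+ 2 = y i 0.
Proof. by move=> y0; rewrite mxE exprMn sqr_sqrtr // sgn_sqr mulr1. Qed.

Lemma simplex_le1 y i : simplex y -> y i 0 <= 1.
Proof. by case=> y0 <-; rewrite (bigD1 i) //= lerDl sumr_ge0. Qed.

Lemma dotv_signed_sqrt y : simplex y -> dotv (signed_sqrt y) (signed_sqrt y) = 1.
Proof.
case=> y0 <-; rewrite dotvE; apply: eq_bigr => i _.
by rewrite -expr2 signed_sqrt_sqr.
Qed.

Lemma reduced_obj_signed_sqrt y : (forall i, 0 <= y i 0) ->
  reduced_obj (signed_sqrt y) = - Fobj lam b y.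
Proof.
move=> y0; rewrite /reduced_obj /Fobj opprB opprK [RHS]addrC dotvE; congr (_ + _).
  by apply: eq_bigr => i _; rewrite mxE -mulrA sgn_mul_norm.
by congr Num.sqrt; apply: eq_bigr => i _; rewrite signed_sqrt_sqr.
Qed.

Lemma reduced_obj_le v y : (forall i, 0 <= lam i 0) ->
  (forall i, v i 0 ^+ 2 <= y i 0) -> reduced_obj v <= - Fobj lam b y.
Proof.
move=> lam0 vy; rewrite /reduced_obj /Fobj opprB opprK [leRHS]addrC dotvE lerD //.
  apply: ler_sum => i _; apply: le_trans (ler_norm _) _.
  by rewrite normrM ler_wpM2r // -sqrtr_sqr ler_wsqrtr.
by apply/ler_wsqrtr/ler_sum => i _; rewrite ler_wpM2l ?invr_ge0.
Qed.

Lemma Fobj_const1_le y : (forall i, 0 <= lam i 0) -> simplex y ->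
  Fobj lam b (const_mx 1) <= Fobj lam b y.
Proof.
move=> lam0 Sy; rewrite -lerN2 -reduced_obj_signed_sqrt; last by case: Sy.
apply: reduced_obj_le => // i; rewrite [leRHS]mxE signed_sqrt_sqr ?simplex_le1 //.
by case: Sy.
Qed.

Lemma simplex_cover v y0 : simplex y0 -> dotv v v <= 1 ->
  exists2 y, simplex y & forall i, v i 0 ^+ 2 <= y i 0.
Proof.
move=> [y00 y0_1] v1; pose y := \col_i (v i 0 ^+ 2 + (1 - dotv v v) * y0 i 0).
have yv i : v i 0 ^+ 2 <= y i 0 by rewrite mxE lerDl mulr_ge0 // subr_ge0.
exists y => //; split=> [i|]; first exact: le_trans (sqr_ge0 _) (yv i).
rewrite /y; under eq_bigr do rewrite mxE.
rewrite big_split -mulr_sumr y0_1 mulr1 dotvE /= addrCA.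
by rewrite (eq_bigr _ (fun i _ => expr2 (v i 0))) subrr addr0.
Qed.

End Objective.

Section Reduction.
Variables (R : realType) (d : nat) (A W Ahalf U : 'M[R]_d) (c lam : 'cV[R]_d).
Hypotheses (HW : sym_posdef W) (HAh : sym_posdef Ahalf) (HAA : Ahalf *m Ahalf = A)
  (HU : U^T *m U = 1%:M) (HL : Ahalf *m W *m Ahalf = U *m diag_mx lam^T *m U^T).
Implicit Types v w x th y : 'cV[R]_d.

Local Notation P := (invmx Ahalf *m U).
Local Notation Wi := (invmx W).
Local Notation thstar x := (c + (mnorm Wi x)^-1 *: (Wi *m x)).
Let b := U^T *m invmx Ahalf *m c.

Lemma Ahalf_unit : Ahalf \in unitmx. Proof. exact: posdef_unit. Qed.

Lemma trmx_invAhalf : (invmx Ahalf)^T = invmx Ahalf.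
Proof. by case: HAh => AhT _; rewrite trmx_inv AhT. Qed.

Lemma P_coordinates x : P *m (U^T *m Ahalf *m x) = x.
Proof.
rewrite !mulmxA -(mulmxA (invmx Ahalf)) (mulmx1C HU) mulmx1.
by rewrite mulVmx ?Ahalf_unit // mul1mx.
Qed.

Lemma coordinates_P v : U^T *m Ahalf *m (P *m v) = v.
Proof. by rewrite !mulmxA mulmxK ?Ahalf_unit // HU mul1mx. Qed.

Lemma dotv_AhalfU_P v w : dotv (Ahalf *m U *m v) (P *m w) = dotv v w.
Proof.
case: HAh => AhT _.
by rewrite dotvMl trmx_mul AhT !mulmxA mulmxK ?Ahalf_unit // HU mul1mx.
Qed.

Lemma mnormA_P v : dotv (P *m v) (A *m (P *m v)) = dotv v v.
Proof.
rewrite dotvMl trmx_mul trmx_invAhalf -HAA !mulmxA.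
by rewrite mulmxKV ?Ahalf_unit // mulmxK ?Ahalf_unit // HU mul1mx.
Qed.

Lemma dotv_P_c v : dotv (P *m v) c = dotv v b.
Proof. by rewrite dotvMl trmx_mul trmx_invAhalf. Qed.

Lemma W_AhalfU v : W *m (Ahalf *m U *m v) = P *m (diag_mx lam^T *m v).
Proof.
apply: (can_inj (mulKmx Ahalf_unit)); rewrite !mulmxA HL mulmxV ?Ahalf_unit //.
by rewrite -(mulmxA _ U^T) HU mulmx1 mul1mx.
Qed.

Lemma lam_gt0 i : 0 < lam i 0.
Proof.
pose v : 'cV[R]_d := delta_mx i 0.
have vv : dotv v v = 1.
  rewrite dotvE (bigD1 i) //= big1 ?addr0 => [|j /negbTE ji].
    by rewrite !mxE eqxx mulr1.
  by rewrite !mxE ji mul0r.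
have Uv0 : Ahalf *m U *m v != 0.
  by apply: contra_neq (@oner_neq0 R) => H; rewrite -vv -dotv_AhalfU_P H dotv0l.
case: HW => _ /(_ _ Uv0); rewrite W_AhalfU dotv_AhalfU_P dotv_diag (bigD1 i) //= big1 ?addr0.
  by rewrite mxE !eqxx expr1n mulr1.
by move=> j /negbTE ji; rewrite mxE ji expr0n mulr0.
Qed.

Lemma mnorm_invW_P v :
  dotv (P *m v) (Wi *m (P *m v)) = \sum_i (lam i 0)^-1 * v i 0 ^+ 2.
Proof.
pose w : 'cV[R]_d := \col_i ((lam i 0)^-1 * v i 0).
have Dw : diag_mx lam^T *m w = v.
  apply/matrixP => i j; rewrite mul_diag_mx !mxE (ord1 j).
  by rewrite mulrA mulfV ?mul1r // gt_eqF // lam_gt0.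
rewrite -{2}Dw -W_AhalfU mulKmx ?posdef_unit // dotvC dotv_AhalfU_P dotvE.
by apply: eq_bigr => i _; rewrite mxE -mulrA expr2.
Qed.

Lemma mnormA_coordinates x :
  dotv x (A *m x) = dotv (U^T *m Ahalf *m x) (U^T *m Ahalf *m x).
Proof. by rewrite -mnormA_P P_coordinates. Qed.

Lemma reduced_obj_coordinates x :
  reduced_obj lam b (U^T *m Ahalf *m x) = dotv x c + mnorm Wi x.
Proof.
set v := U^T *m Ahalf *m x; rewrite -(P_coordinates x) -/v.
by rewrite dotv_P_c /mnorm mnorm_invW_P.
Qed.

Lemma PB_value_le x th : Thset W c th ->
  dotv x th <= reduced_obj lam b (U^T *m Ahalf *m x).
Proof.
move=> Hth; rewrite reduced_obj_coordinates -(subrKC c th) dotvDr lerD2l.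
exact: dotv_le_mnorm_invmx.
Qed.

Lemma PB_value_thstar x : x != 0 ->
  Thset W c (thstar x) /\ dotv x (thstar x) = reduced_obj lam b (U^T *m Ahalf *m x).
Proof.
move=> x0; split; first by rewrite /Thset /= addrC addKr mnorm_maximizer.
by rewrite reduced_obj_coordinates dotvDr dotv_x_maximizer.
Qed.

Lemma PB_value_lift y : simplex y ->
  let x := P *m signed_sqrt b y in
  [/\ Xset A x, Thset W c (thstar x) & dotv x (thstar x) = - Fobj lam b y].
Proof.
move=> Sy x; have uu := dotv_signed_sqrt b Sy.
have xA : dotv x (A *m x) = 1 by rewrite mnormA_P.
have x0 : x != 0.
  by apply: contra_eq_neq xA => ->; rewrite mulmx0 dotv0l eq_sym oner_eq0.
have [Hth ->] := PB_value_thstar x0.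
split=> //; first by rewrite /Xset /= /mnorm xA sqrtr1.
by rewrite coordinates_P reduced_obj_signed_sqrt //; case: Sy.
Qed.

Lemma PB_value_le_PC y0 x th : simplex y0 -> Xset A x -> Thset W c th ->
  exists2 y, simplex y & dotv x th <= - Fobj lam b y.
Proof.
move=> Sy0 Hx Hth; have v1 : dotv (U^T *m Ahalf *m x) (U^T *m Ahalf *m x) <= 1.
  by move: Hx; rewrite /Xset /= /mnorm mnormA_coordinates -{1}sqrtr1 ler_sqrt.
have [y Sy vy] := simplex_cover Sy0 v1; exists y => //.
apply: le_trans (PB_value_le x Hth) (reduced_obj_le _ _ vy) => i.
exact/ltW/lam_gt0.
Qed.

Lemma sup_PB y0 : simplex y0 ->
  sup [set dotv x th | x in Xset A & th in Thset W c] =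
  - inf [set Fobj lam b y | y in @simplex R d].
Proof.
move=> Sy0; rewrite /inf opprK.
set SB := [set dotv x th | x in _ & th in _]; set N := -%R @` _.
have NSB : N `<=` SB.
  move=> _ [_ [y Sy <-] <-]; have [Hx Hth <-] := PB_value_lift Sy.
  by exists (P *m signed_sqrt b y) => //; exists (thstar (P *m signed_sqrt b y)).
have SBN : SB `<=` down N.
  move=> _ [x Hx [th Hth <-]]; have [y Sy le_xy] := PB_value_le_PC Sy0 Hx Hth.
  by apply/downP; exists (- Fobj lam b y) => //; exists (Fobj lam b y) => //; exists y.
have N0 : N !=set0 by exists (- Fobj lam b y0); exists (Fobj lam b y0) => //; exists y0.
have supN : has_sup N.
  split=> //; exists (- Fobj lam b (const_mx 1)) => _ [_ [y Sy <-] <-].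
  by rewrite lerN2 Fobj_const1_le // => i; exact/ltW/lam_gt0.
have supSB : has_sup SB.
  split; first by case: N0 => e /NSB; exists e.
  case: supN => _ [m ubm]; exists m => e /SBN /downP [e' Ne' le_ee'].
  exact: le_trans le_ee' (ubm _ Ne').
apply/le_anti/andP; split; apply: sup_le => //.
- by case: N0 => e /NSB; exists e.
- by move=> e /NSB; exact: le_down.
Qed.

End Reduction.

Theorem theorem2 (R : realType) (d : nat) (A W : 'M[R]_d) (c : 'cV[R]_d)
    (Ahalf U : 'M[R]_d) (lam : 'cV[R]_d) (y : 'cV[R]_d) :
  sym_posdef A -> sym_posdef W ->
  sym_posdef Ahalf -> Ahalf *m Ahalf = A ->
  U^T *m U = 1%:M ->
  Ahalf *m W *m Ahalf = U *m diag_mx lam^T *m U^T ->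
  y \in @simplex R d ->
  let b := U^T *m invmx Ahalf *m c in
  let u := \col_i (Num.sqrt (y i 0) * sgn (b i 0)) in
  let x := invmx Ahalf *m U *m u in
  let th := c + (mnorm (invmx W) x)^-1 *: (invmx W *m x) in
  (x \in Xset A /\ th \in Thset W c) /\
  (forall eps : R, 0 < eps ->
     (eps_sol_PC lam b eps y <-> eps_sol_PB A W c eps x th)).
Proof.
move=> _ HW HAh HAA HU HL /set_mem Sy b u x th.
have [Hx Hth val] := PB_value_lift c HW HAh HAA HU HL Sy.
have supE := sup_PB c HW HAh HAA HU HL Sy.
split; first by split; apply: mem_set.
move=> eps _; rewrite /eps_sol_PC /eps_sol_PB supE -/x -/th val.
split=> [[_ le_y]|[_ [_ le_x]]]; last by split; [exact: mem_set | lra].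
by split; [exact: mem_set | split; [exact: mem_set | lra]].
Qed.
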